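(* For all $\eta,\varepsilon>0$ and $c\in\mathbb N$ there exist $\eta'>0$ and $n_0$ such that the following holds for all $n\ge n_0$. Let $H$ be a $3$-graph of order $n$. Let $V_1,\dots,V_d$ be disjoint subsets of $V(H)$ with $2\le d\le4$, each $(c,\eta)$-closed in $H$. Let $a_1,\dots,a_d$ be non-negative integers with $a_1\ge1$ and $\sum_i a_i=4$. Suppose there are at least $\varepsilon n^4$ copies $F$ of $K_4^-$ in $H$ with $|V(F)\cap V_i|=a_i$ for all $i\in[d]$, and at least $\varepsilon n^4$ copies $F'$ of $K_4^-$ in $H$ with $|V(F')\cap V_1|=a_1-1$, $|V(F')\cap V_2|=a_2+1$ and $|V(F')\cap V_j|=a_j$ for all $3\le j\le d$. Then $V_1\cup V_2$ is $(5c+1,\eta')$-closed in $H$.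
   Context: $K_4^-$ is the $3$-graph with $4$ vertices and $3$ edges; copies are counted as $4$-subsets of $V(H)$ spanning a (not necessarily induced) copy. A $K_4^-$-factor is a set of vertex-disjoint copies covering all vertices. Let $H$ be a $3$-graph of order $n$. For $c\in\mathbb N$, a set $S\subseteq V(H)$ is an $(x,y)$-connector of length $c$ if $S\cap\{x,y\}=\emptyset$, $|S|=4c-1$, and both $H[S\cup\{x\}]$ and $H[S\cup\{y\}]$ contain $K_4^-$-factors. Vertices $x,y$ are $(c,\eta)$-close if there are at least $\eta n^{4c-1}$ $(x,y)$-connectors of length $c$ in $H$. A set $U\subseteq V(H)$ is $(c,\eta)$-closed in $H$ if every two vertices of $U$ are $(c,\eta)$-close in $H$. *)

From Stdlib Require Import Reals.
From mathcomp Require Import all_boot.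
Set Implicit Arguments. Unset Strict Implicit. Unset Printing Implicit Defensive.

(* A 3-graph of order n: vertex set 'I_n, edge set a set of 3-subsets
   (uniformity is assumed as a hypothesis in the theorem). *)
Definition hgraph (n : nat) := {set {set 'I_n}}.

(* The 4-set S spans a (not necessarily induced) copy of K_4^- (3 edges). *)
Definition spans_K4m n (H : hgraph n) (S : {set 'I_n}) : bool :=
  (#|S| == 4) && (3 <= #|[set e in H | e \subset S]|).

Definition has_K4m_factor n (H : hgraph n) (X : {set 'I_n}) : bool :=
  [exists P : {set {set 'I_n}}, partition P X && [forall B in P, spans_K4m H B]].

Definition connector n (H : hgraph n) (c : nat) (x y : 'I_n) (S : {set 'I_n}) : bool :=
  [&& x \notin S, y \notin S, #|S| == (4 * c - 1)%nat,
      has_K4m_factor H (x |: S) & has_K4m_factor H (y |: S)].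

Definition is_close n (H : hgraph n) (c : nat) (eta : R) (x y : 'I_n) : Prop :=
  Rle (Rmult eta (pow (INR n) (4 * c - 1))) (INR #|[set S | connector H c x y S]|).

Definition is_closed n (H : hgraph n) (c : nat) (eta : R) (U : {set 'I_n}) : Prop :=
  forall x y, x \in U -> y \in U -> x != y -> is_close H c eta x y.

Definition count_K4m n (H : hgraph n) (P : {set 'I_n} -> bool) : nat :=
  #|[set S : {set 'I_n} | spans_K4m H S && P S]|.

(* Let x ∈ V_i and y ∈ V_j with i, j ∈ {1, 2}.  Removing one V_1-slot from the first
   pattern leaves an index triple (q1, q2, q3) shared by both patterns, so there are at
   least ε n^4 copies {u, w1, w2, w3} of K_4^- with u ∈ V_i and w_k ∈ V_(q_k), and as many
   copies {v, v1, v2, v3} with v ∈ V_j.  Choose two such copies F and F', then connectors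
   C0 for (x, u), C4 for (y, v) and C_k for (w_k, v_k), all nine pieces pairwise disjoint.
   Their union S is an (x, y)-connector of length 5c + 1: {x} ∪ S splits into the blocks
   {x} ∪ C0, F, {v_k} ∪ C_k, {v} ∪ C4, and {y} ∪ S into {u} ∪ C0, {w_k} ∪ C_k, F', {y} ∪ C4.
   Each choice has to avoid only O(1) earlier vertices, which for large n rules out at most
   half of the options, so there are at least (ε n^4 / 2)^2 (η n^(4c-1) / 2)^5
   configurations, while a given S arises from at most |S|^8 2^(5|S|) of them. *)

From Stdlib Require Import Reals Lra.
From mathcomp Require Import all_boot zify.
Set Implicit Arguments. Unset Strict Implicit. Unset Printing Implicit Defensive.
Delimit Scope R_scope with Re.

Lemma cardsU_disjoint (T : finType) (A B : {set T}) :
  [disjoint A & B] -> #|A :|: B| = #|A| + #|B|.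
Proof. by move=> D; apply/eqP; rewrite (leq_card_setU A B).2. Qed.

Lemma K4m_factorU n (H : hgraph n) (A B : {set 'I_n}) :
  has_K4m_factor H A -> has_K4m_factor H B -> [disjoint A & B] ->
  has_K4m_factor H (A :|: B).
Proof.
move=> /existsP[P /andP[pP fP]] /existsP[Q /andP[pQ fQ]] D.
apply/existsP; exists (P :|: Q); apply/andP; split.
  move: pP pQ => /and3P[/eqP cP tP nP] /and3P[/eqP cQ tQ nQ].
  apply/and3P; split.
  - by rewrite /cover bigcup_setU -/(cover P) -/(cover Q) cP cQ.
  - by rewrite setUC; apply: trivIsetU; rewrite // cP cQ disjoint_sym.
  - by rewrite inE negb_or nP nQ.
apply/forallP => F; apply/implyP; rewrite inE => /orP[FP|FQ].
  exact: (implyP (forallP fP F)).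
exact: (implyP (forallP fQ F)).
Qed.

Lemma K4m_factor_spans n (H : hgraph n) (F : {set 'I_n}) :
  spans_K4m H F -> has_K4m_factor H F.
Proof.
move=> sF; apply/existsP; exists [set F]; apply/andP; split.
  rewrite /partition cover1 eqxx trivIset1 inE eq_sym.
  by apply: contraTneq sF => ->; rewrite /spans_K4m cards0.
by apply/forallP => G; apply/implyP; rewrite inE => /eqP ->.
Qed.

(* A union whose size is the sum of the sizes of its parts is a disjoint union. *)
Lemma K4m_factor_bigU n (H : hgraph n) (Bs : seq {set 'I_n}) :
  all (has_K4m_factor H) Bs ->
  (\sum_(B <- Bs) #|B| <= #|\bigcup_(B <- Bs) B|)%N ->
  has_K4m_factor H (\bigcup_(B <- Bs) B).
Proof.
elim: Bs => [_ _ | B Bs IH /andP[fB fBs]].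
  rewrite big_nil; apply/existsP; exists set0; apply/andP; split.
    by rewrite /partition /trivIset /cover !big_set0 cards0 !eqxx inE.
  by apply/forallP => B; rewrite inE.
rewrite !big_cons => hsum.
have hU : (#|\bigcup_(C <- Bs) C| <= \sum_(C <- Bs) #|C|)%N.
  elim: (Bs) => [|C Cs IHC]; first by rewrite !big_nil cards0.
  by rewrite !big_cons (leq_trans (leq_card_setU _ _)) // leq_add2l.
have hB := leq_card_setU B (\bigcup_(C <- Bs) C).
have D : [disjoint B & \bigcup_(C <- Bs) C].
  by rewrite -hB.2 eqn_leq hB.1 (leq_trans _ hsum) // leq_add2l.
apply: (K4m_factorU fB (IH fBs _) D).
by move: hsum; rewrite (cardsU_disjoint D) leq_add2l.
Qed.

Lemma disjoint_setUl (T : finType) (A B C : {set T}) :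
  [disjoint A :|: B & C] = [disjoint A & C] && [disjoint B & C].
Proof. by rewrite -disjointU; apply: eq_disjoint => z; rewrite !inE. Qed.

Lemma disjoint_setUr (T : finType) (A B C : {set T}) :
  [disjoint C & A :|: B] = [disjoint C & A] && [disjoint C & B].
Proof. by rewrite disjoint_sym disjoint_setUl !(disjoint_sym C). Qed.

Lemma card_pairs_ge (X Y : finType) (ok : pred X) (g : X -> pred Y) (r : R) :
  (forall x, ok x -> (r <= INR #|[set y | g x y]|)%Re) ->
  (INR #|[set x | ok x]| * r <= INR #|[set t : X * Y | ok t.1 && g t.1 t.2]|)%Re.
Proof.
move=> hr.
have -> : #|[set t : X * Y | ok t.1 && g t.1 t.2]| = \sum_(x | ok x) #|[set y | g x y]|.
  rewrite -sum1_card (eq_bigl (fun t => ok t.1 && g t.1 t.2)) => [|t]; last by rewrite inE.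
  rewrite -(pair_big_dep ok g (fun _ _ => 1)); apply: eq_bigr => x _.
  by rewrite -sum1_card; apply: eq_bigl => y; rewrite inE.
rewrite -sum1_card (eq_bigl ok) => [|x]; last by rewrite inE.
apply: (big_ind2 (fun a b : nat => INR a * r <= INR b)%Re) => [|a1 b1 a2 b2 h1 h2|x okx].
- by rewrite /=; lra.
- by rewrite !plus_INR; lra.
- by rewrite Rmult_1_l; apply: hr.
Qed.

Section Avoiding.
Variables (T U : finType) (P : pred T) (g : T -> {set U}) (Z : {set U}) (B : nat).
Hypothesis through_le : forall z, (#|[set t | P t && (z \in g t)]| <= B)%N.

(* Double counting of the pairs (t, z) with z in g t and z in Z. *)
Lemma card_meeting_le : (#|[set t | P t && ~~ [disjoint g t & Z]]| <= #|Z| * B)%N.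
Proof.
have count_as_sum (Q : pred T) : #|[set t | Q t]| = \sum_(t | Q t) 1.
  by rewrite -sum1_card; apply: eq_bigl => t; rewrite inE.
have meet_size t : #|g t :&: Z| = \sum_(z in Z) (z \in g t).
  rewrite -sum1_card big_mkcond [RHS]big_mkcond; apply: eq_bigr => z _.
  by rewrite inE andbC; case: (z \in Z); case: (z \in g t).
rewrite count_as_sum big_mkcondr /=.
apply: (@leq_trans (\sum_(t | P t) \sum_(z in Z) (z \in g t))).
  apply: leq_sum => t _; case: ifP => // meet; rewrite -meet_size card_gt0.
  by rewrite setI_eq0.
rewrite exchange_big /= -sum_nat_const; apply: leq_sum => z _.
apply: leq_trans (through_le z); rewrite count_as_sum big_mkcondr /=.
by apply: eq_leq; apply: eq_bigr => t _; case: (z \in g t).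
Qed.

Lemma card_avoiding_ge :
  (#|[set t | P t]| <= #|[set t | P t && [disjoint g t & Z]]| + #|Z| * B)%N.
Proof.
apply: leq_trans (leq_add (leqnn _) card_meeting_le).
apply: leq_trans (leq_card_setU _ _); apply: subset_leq_card; apply/subsetP => t.
by rewrite !inE => Pt; rewrite Pt; case: [disjoint _ & _].
Qed.

End Avoiding.

Lemma card_avoiding_half (T U : finType) (P : pred T) (g : T -> {set U})
    (Z : {set U}) (B : nat) (r : R) :
  (forall z, #|[set t | P t && (z \in g t)]| <= B)%N ->
  (r <= INR #|[set t | P t]|)%Re -> (2 * INR (#|Z| * B) <= r)%Re ->
  (r / 2 <= INR #|[set t | P t && [disjoint g t & Z]]|)%Re.
Proof.
move=> through_le hr hZ; move: (card_avoiding_ge Z through_le) => /leP /le_INR.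
rewrite plus_INR; lra.
Qed.

Lemma card_extensions_ge (X Y U : finType) (ok : pred X) (cand : X -> pred Y)
    (g : Y -> {set U}) (Z : X -> {set U}) (B : nat) (r : R) :
  (forall x z, #|[set y | cand x y && (z \in g y)]| <= B)%N ->
  (forall x, ok x -> (r <= INR #|[set y | cand x y]|)%Re /\ (2 * INR (#|Z x| * B) <= r)%Re) ->
  (INR #|[set x | ok x]| * (r / 2) <=
   INR #|[set t : X * Y | ok t.1 && (cand t.1 t.2 && [disjoint g t.2 & Z t.1])]|)%Re.
Proof.
move=> through_le hx.
apply: (card_pairs_ge (g := fun x y => cand x y && [disjoint g y & Z x])) => x okx.
by have [hr hZ] := hx x okx; apply: card_avoiding_half.
Qed.

Lemma bin_le_expn k m : ('C(k, m) <= k ^ m)%N.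
Proof.
rewrite (leq_trans (leq_pmulr _ (fact_gt0 m))) // bin_ffact ffact_prod.
apply: (@leq_trans (\prod_(i < m) k)); first by apply: leq_prod => i _; apply: leq_subr.
by rewrite prod_nat_const card_ord.
Qed.

Lemma card_sets_through n (z : 'I_n) m :
  (#|[set C : {set 'I_n} | (#|C| == m.+1) && (z \in C)]| <= n ^ m)%N.
Proof.
set A := [set C : {set 'I_n} | _].
have inj : {in A &, injective (fun C => C :\ z)}.
  move=> C1 C2; rewrite !inE => /andP[_ z1] /andP[_ z2] e.
  by rewrite -(setD1K z1) -(setD1K z2) e.
rewrite -(card_in_imset inj).
apply: (@leq_trans #|[set D : {set 'I_n} | #|D| == m]|).
  apply: subset_leq_card; apply/subsetP => D /imsetP[C]; rewrite inE => /andP[/eqP cC zC] ->.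
  by rewrite inE (cardsD1 z C) zC add1n in cC *; case: cC => ->.
by rewrite card_draws card_ord bin_le_expn.
Qed.

Lemma INR_expn a b : INR (a ^ b) = (INR a ^ b)%Re.
Proof. by elim: b => [|b IH] //; rewrite expnS mult_INR IH. Qed.

Lemma INR_mul_pow_le n (k K a B m : nat) (e : R) :
  (k <= K)%N -> (B <= a * n ^ m)%N -> (2 * INR (a * K) <= e * INR n)%Re ->
  (2 * INR (k * B) <= e * INR n ^ m.+1)%Re.
Proof.
move=> /leP/le_INR kK /leP/le_INR; rewrite !mult_INR INR_expn => hB haK.
have P0 : (0 <= INR n ^ m)%Re by apply: pow_le; apply: pos_INR.
have a0 := pos_INR a; have k0 := pos_INR k; have B0 := pos_INR B.
rewrite /=; nra.
Qed.

Definition quad n := ('I_n * 'I_n * 'I_n * 'I_n)%type.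

Definition vtx n (A : quad n) (k : nat) : 'I_n :=
  match k with 0 => A.1.1.1 | 1 => A.1.1.2 | 2 => A.1.2 | _ => A.2 end.

Definition quad_set n (A : quad n) : {set 'I_n} := [set vtx A 0; vtx A 1; vtx A 2; vtx A 3].

Lemma vtx_quad_set n (A : quad n) k : vtx A k \in quad_set A.
Proof. by rewrite !inE; case: k => [|[|[|k]]]; rewrite eqxx ?orbT. Qed.

Lemma card_quad_set_le n (A : quad n) : (#|quad_set A| <= 4)%N.
Proof.
have E : quad_set A =i [:: vtx A 0; vtx A 1; vtx A 2; vtx A 3].
  by move=> z; rewrite !inE !orbA.
by rewrite (eq_card E) card_size.
Qed.

Lemma card_quads_through n (z : 'I_n) : (#|[set A : quad n | z \in quad_set A]| <= 4 * n ^ 3)%N.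
Proof.
set T := [set: 'I_n]; set Z := [set z].
have -> : [set A : quad n | z \in quad_set A] = setX (setX (setX Z T) T) T :|:
    setX (setX (setX T Z) T) T :|: setX (setX (setX T T) Z) T :|: setX (setX (setX T T) T) Z.
  by apply/setP => -[[[a b] c] d]; rewrite !inE /= !andbT !(eq_sym z).
apply: (leq_trans (leq_card_setU _ _)).
apply: (leq_trans (leq_add (leq_card_setU _ _) (leqnn _))).
apply: (leq_trans (leq_add (leq_add (leq_card_setU _ _) (leqnn _)) (leqnn _))).
by rewrite !cardsX !cards1 cardsT card_ord; lia.
Qed.

Lemma disjoint_neq (T : finType) (A B : {set T}) p q :
  [disjoint A & B] -> p \in A -> q \in B -> p != q.
Proof. by move=> D pA qB; apply: contraTneq qB => <-; rewrite (disjointFr D pA). Qed.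

Lemma connector_card n (H : hgraph n) c p q C : connector H c p q C -> #|C| = (4 * c - 1)%N.
Proof. by case/and5P => _ _ /eqP. Qed.

Definition good_quad n (H : hgraph n) (Q : nat -> {set 'I_n}) (V0 : {set 'I_n}) (A : quad n) :=
  [&& spans_K4m H (quad_set A), vtx A 0 \in V0, vtx A 1 \in Q 1, vtx A 2 \in Q 2 & vtx A 3 \in Q 3].

Lemma good_quad_leg n (H : hgraph n) Q V0 A k :
  good_quad H Q V0 A -> (1 <= k <= 3)%N -> vtx A k \in Q k.
Proof. by case/and5P => _ _ h1 h2 h3; case: k => [|[|[|[|k]]]]. Qed.

(* Two quads, x, y and at most four connectors of size 4c - 1 chosen before. *)
Definition avoid_bound c := (10 + 4 * (4 * c - 1))%N.

Section Configurations.
Variables (n : nat) (H : hgraph n) (c : nat) (Q : nat -> {set 'I_n}) (Vx Vy : {set 'I_n}).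
Variables (x y : 'I_n).

Definition fresh (U S : {set 'I_n}) := [disjoint S & U :|: [set x; y]].

Definition link (U : {set 'I_n}) (p q : 'I_n) (C : {set 'I_n}) :=
  connector H c p q C && fresh U C.

(* A configuration is chosen in seven steps: a quad A with A_0 in Vx, a quad B with B_0 in
   Vy, and connectors for (x, A_0), (y, B_0) and (A_k, B_k), k = 1, 2, 3.  [stagek t] says
   that the first k choices t are valid, each avoiding x, y and all earlier choices, whose
   union is [usedk t]. *)
Definition pre2 := (quad n * quad n)%type.
Definition pre3 := (pre2 * {set 'I_n})%type.
Definition pre4 := (pre3 * {set 'I_n})%type.
Definition pre5 := (pre4 * {set 'I_n})%type.
Definition pre6 := (pre5 * {set 'I_n})%type.
Definition pre7 := (pre6 * {set 'I_n})%type.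

Definition base3 (t : pre3) : pre2 := t.1.
Definition base4 (t : pre4) := base3 t.1.
Definition base5 (t : pre5) := base4 t.1.
Definition base6 (t : pre6) := base5 t.1.

Definition used2 (p : pre2) := quad_set p.1 :|: quad_set p.2.
Definition used3 (t : pre3) := used2 t.1 :|: t.2.
Definition used4 (t : pre4) := used3 t.1 :|: t.2.
Definition used5 (t : pre5) := used4 t.1 :|: t.2.
Definition used6 (t : pre6) := used5 t.1 :|: t.2.
Definition used7 (t : pre7) := used6 t.1 :|: t.2.

Definition stage1 (A : quad n) := good_quad H Q Vx A && [disjoint quad_set A & [set x; y]].
Definition stage2 (p : pre2) :=
  stage1 p.1 && (good_quad H Q Vy p.2 && fresh (quad_set p.1) (quad_set p.2)).
Definition stage3 (t : pre3) := stage2 t.1 && link (used2 t.1) x (vtx t.1.1 0) t.2.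
Definition stage4 (t : pre4) := stage3 t.1 && link (used3 t.1) y (vtx (base3 t.1).2 0) t.2.
Definition stage5 (t : pre5) :=
  stage4 t.1 && link (used4 t.1) (vtx (base4 t.1).1 1) (vtx (base4 t.1).2 1) t.2.
Definition stage6 (t : pre6) :=
  stage5 t.1 && link (used5 t.1) (vtx (base5 t.1).1 2) (vtx (base5 t.1).2 2) t.2.
Definition stage7 (t : pre7) :=
  stage6 t.1 && link (used6 t.1) (vtx (base6 t.1).1 3) (vtx (base6 t.1).2 3) t.2.

Definition used_ok (U : {set 'I_n}) (k : nat) :=
  (#|U| == 8 + k * (4 * c - 1))%N && [disjoint U & [set x; y]].

Lemma link_used_ok U k p q C : used_ok U k -> link U p q C -> used_ok (U :|: C) k.+1.
Proof.
move=> /andP[/eqP cU dU] /andP[conC]; rewrite /fresh disjoint_setUr => /andP[dCU dCxy].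
rewrite /used_ok disjoint_setUl dU dCxy (cardsU_disjoint _) 1?disjoint_sym //.
by rewrite cU (connector_card conC) mulSn andbT; apply/eqP; lia.
Qed.

Lemma stage2_used p : stage2 p -> used_ok (used2 p) 0.
Proof.
case/andP => /andP[/and5P[/andP[/eqP cA _] _ _ _ _] dA].
case/andP => /and5P[/andP[/eqP cB _] _ _ _ _]; rewrite /fresh disjoint_setUr => /andP[dBA dB].
rewrite /used_ok disjoint_setUl dA dB (cardsU_disjoint _) 1?disjoint_sym //.
by rewrite cA cB.
Qed.

Lemma stage3_used t : stage3 t -> used_ok (used3 t) 1.
Proof. by case/andP => /stage2_used; apply: link_used_ok. Qed.

Lemma stage4_used t : stage4 t -> used_ok (used4 t) 2.
Proof. by case/andP => /stage3_used; apply: link_used_ok. Qed.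

Lemma stage5_used t : stage5 t -> used_ok (used5 t) 3.
Proof. by case/andP => /stage4_used; apply: link_used_ok. Qed.

Lemma stage6_used t : stage6 t -> used_ok (used6 t) 4.
Proof. by case/andP => /stage5_used; apply: link_used_ok. Qed.

Lemma stage7_used t : stage7 t -> used_ok (used7 t) 5.
Proof. by case/andP => /stage6_used; apply: link_used_ok. Qed.

Lemma stage3_base t : stage3 t -> stage2 (base3 t).
Proof. by case/andP. Qed.

Lemma stage4_base t : stage4 t -> stage2 (base4 t).
Proof. by case/andP => /stage3_base. Qed.

Lemma stage5_base t : stage5 t -> stage2 (base5 t).
Proof. by case/andP => /stage4_base. Qed.

Lemma stage6_base t : stage6 t -> stage2 (base6 t).
Proof. by case/andP => /stage5_base. Qed.

Variables (eta eps : R).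
Hypotheses (clVx : is_closed H c eta Vx) (clVy : is_closed H c eta Vy).
Hypothesis clQ : forall k, (1 <= k <= 3)%N -> is_closed H c eta (Q k).
Hypotheses (xVx : x \in Vx) (yVy : y \in Vy).

Lemma stage2_close p : stage2 p ->
  [/\ is_close H c eta x (vtx p.1 0), is_close H c eta y (vtx p.2 0) &
      forall k, (1 <= k <= 3)%N -> is_close H c eta (vtx p.1 k) (vtx p.2 k)].
Proof.
case/andP => /andP[gA dA] /andP[gB]; rewrite /fresh disjoint_setUr => /andP[dBA dB].
split.
- apply: clVx => //; first by case/and5P: gA.
  by rewrite eq_sym (disjoint_neq dA (vtx_quad_set _ _) (set21 x y)).
- apply: clVy => //; first by case/and5P: gB.
  by rewrite eq_sym (disjoint_neq dB (vtx_quad_set _ _) (set22 x y)).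
- move=> k hk; apply: (clQ hk); [exact: good_quad_leg gA hk | exact: good_quad_leg gB hk |].
  by rewrite eq_sym (disjoint_neq dBA (vtx_quad_set _ _) (vtx_quad_set _ _)).
Qed.

Lemma used_ok_card U k : used_ok U k -> (k <= 4)%N -> (#|U :|: [set x; y]| <= avoid_bound c)%N.
Proof.
move=> /andP[/eqP cU _] hk; apply: leq_trans (leq_card_setU _ _) _.
have xy2 : (#|[set x; y]| <= 2)%N by rewrite cards2; case: (x != y).
have km : (k * (4 * c - 1) <= 4 * (4 * c - 1))%N by rewrite leq_mul2r hk orbT.
by rewrite cU; apply: leq_trans (leq_add (leq_add (leqnn 8) km) xy2) _; rewrite /avoid_bound; lia.
Qed.

Lemma card_stage1_ge :
  (eps * INR n ^ 4 <= INR #|[set A | good_quad H Q Vx A]|)%Re ->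
  (2 * INR (4 * avoid_bound c) <= eps * INR n)%Re ->
  (eps * INR n ^ 4 / 2 <= INR #|[set A | stage1 A]|)%Re.
Proof.
move=> hV hK; apply: (card_avoiding_half (g := @quad_set n) (B := 4 * n ^ 3)) hV _.
  by move=> z; apply: leq_trans (card_quads_through z); apply: subset_leq_card;
    apply/subsetP => A; rewrite !inE => /andP[_ ->].
apply: INR_mul_pow_le (leqnn _) hK.
apply: leq_trans (_ : 2 <= avoid_bound c)%N; first by rewrite cards2; case: (x != y).
by rewrite /avoid_bound; lia.
Qed.

Lemma card_quad_stage_ge (X : finType) (ok : pred X) (V0 : {set 'I_n}) (Z : X -> {set 'I_n}) :
  (eps * INR n ^ 4 <= INR #|[set A | good_quad H Q V0 A]|)%Re ->
  (2 * INR (4 * avoid_bound c) <= eps * INR n)%Re ->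
  (forall t, ok t -> (#|Z t| <= avoid_bound c)%N) ->
  (INR #|[set t | ok t]| * (eps * INR n ^ 4 / 2) <=
   INR #|[set s : X * quad n |
            ok s.1 && (good_quad H Q V0 s.2 && [disjoint quad_set s.2 & Z s.1])]|)%Re.
Proof.
move=> hV hK hZ.
apply: (card_extensions_ge (ok := ok) (cand := fun _ => good_quad H Q V0) (g := @quad_set n)
  (Z := Z) (B := 4 * n ^ 3)).
  move=> _ z; apply: leq_trans (card_quads_through z); apply: subset_leq_card.
  by apply/subsetP => A; rewrite !inE => /andP[_ ->].
by move=> t okt; split; last exact: INR_mul_pow_le (hZ t okt) (leqnn _) hK.
Qed.

Lemma card_link_stage_ge (X : finType) (ok : pred X) (U : X -> {set 'I_n}) (p q : X -> 'I_n) :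
  (1 <= c)%N -> (2 * INR (avoid_bound c) <= eta * INR n)%Re ->
  (forall t, ok t -> is_close H c eta (p t) (q t) /\ (#|U t :|: [set x; y]| <= avoid_bound c)%N) ->
  (INR #|[set t | ok t]| * (eta * INR n ^ (4 * c - 1) / 2) <=
   INR #|[set s : X * {set 'I_n} | ok s.1 && link (U s.1) (p s.1) (q s.1) s.2]|)%Re.
Proof.
move=> c1 hK hok; have e : (4 * c - 1 = (4 * c - 2).+1)%N by lia.
apply: (card_extensions_ge (ok := ok) (cand := fun t C => connector H c (p t) (q t) C)
  (g := id) (Z := fun t => U t :|: [set x; y]) (B := n ^ (4 * c - 2))).
  move=> t z; apply: leq_trans (card_sets_through z (4 * c - 2)); apply: subset_leq_card.
  by apply/subsetP => C; rewrite !inE => /andP[/connector_card -> ->]; rewrite -e eqxx.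
move=> t /hok[cl hU]; split; first exact: cl.
by rewrite e; apply: (INR_mul_pow_le (a := 1)) hU _ _; rewrite mul1n.
Qed.

Lemma card_stage7_ge : (1 <= c)%N -> (0 <= eta)%Re -> (0 <= eps)%Re ->
  (eps * INR n ^ 4 <= INR #|[set A | good_quad H Q Vx A]|)%Re ->
  (eps * INR n ^ 4 <= INR #|[set A | good_quad H Q Vy A]|)%Re ->
  (2 * INR (4 * avoid_bound c) <= eps * INR n)%Re -> (2 * INR (avoid_bound c) <= eta * INR n)%Re ->
  let a := (eps * INR n ^ 4 / 2)%Re in let w := (eta * INR n ^ (4 * c - 1) / 2)%Re in
  (a * a * w * w * w * w * w <= INR #|[set t | stage7 t]|)%Re.
Proof.
move=> c1 eta0 eps0 hVx hVy hKe hKw a w.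
have pow0 m : (0 <= INR n ^ m)%Re by apply: pow_le; apply: pos_INR.
have a0 : (0 <= a)%Re by rewrite /a; have := pow0 4%N; nra.
have w0 : (0 <= w)%Re by rewrite /w; have := pow0 (4 * c - 1)%N; nra.
have s1 := card_stage1_ge hVx hKe.
have s2 := card_quad_stage_ge (ok := stage1) (Z := fun A => quad_set A :|: [set x; y]) hVy hKe.
have s3 := card_link_stage_ge (ok := stage2) (U := used2) (p := fun=> x)
  (q := fun p => vtx p.1 0) c1 hKw.
have s4 := card_link_stage_ge (ok := stage3) (U := used3) (p := fun=> y)
  (q := fun t => vtx (base3 t).2 0) c1 hKw.
have s5 := card_link_stage_ge (ok := stage4) (U := used4) (p := fun t => vtx (base4 t).1 1)
  (q := fun t => vtx (base4 t).2 1) c1 hKw.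
have s6 := card_link_stage_ge (ok := stage5) (U := used5) (p := fun t => vtx (base5 t).1 2)
  (q := fun t => vtx (base5 t).2 2) c1 hKw.
have s7 := card_link_stage_ge (ok := stage6) (U := used6) (p := fun t => vtx (base6 t).1 3)
  (q := fun t => vtx (base6 t).2 3) c1 hKw.
apply: Rle_trans (s7 _) => [|t st]; last first.
  have [_ _ legs] := stage2_close (stage6_base st).
  by split; [apply: legs | apply: used_ok_card (stage6_used st) _].
apply: (Rmult_le_compat_r _ _ _ w0); apply: Rle_trans (s6 _) => [|t st]; last first.
  have [_ _ legs] := stage2_close (stage5_base st).
  by split; [apply: legs | apply: used_ok_card (stage5_used st) _].
apply: (Rmult_le_compat_r _ _ _ w0); apply: Rle_trans (s5 _) => [|t st]; last first.
  have [_ _ legs] := stage2_close (stage4_base st).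
  by split; [apply: legs | apply: used_ok_card (stage4_used st) _].
apply: (Rmult_le_compat_r _ _ _ w0); apply: Rle_trans (s4 _) => [|t st]; last first.
  have [_ close_y _] := stage2_close (stage3_base st).
  by split; [apply: close_y | apply: used_ok_card (stage3_used st) _].
apply: (Rmult_le_compat_r _ _ _ w0); apply: Rle_trans (s3 _) => [|p sp]; last first.
  have [close_x _ _] := stage2_close sp.
  by split; [apply: close_x | apply: used_ok_card (stage2_used sp) _].
apply: (Rmult_le_compat_r _ _ _ w0); apply: Rle_trans (s2 _) => [|A _]; last first.
  apply: leq_trans (leq_card_setU _ _) _; have := card_quad_set_le A.
  by rewrite cards2 /avoid_bound; case: (x != y); lia.
exact: (Rmult_le_compat_r _ _ _ a0 s1).
Qed.

End Configurations.

Lemma connector_cardU1 n (H : hgraph n) c p q C : (1 <= c)%N -> connector H c p q C ->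
  #|p |: C| = (4 * c)%N /\ #|q |: C| = (4 * c)%N.
Proof. by move=> c1 /and5P[pC qC /eqP cC _ _]; rewrite !cardsU1 pC qC cC; lia. Qed.

Ltac set_eq_by_cases :=
  let z := fresh "z" in let h := fresh "h" in
  apply/setP => z; rewrite !inE; apply/idP/idP => h;
  repeat (case/orP: h => h); rewrite h ?orbT.

Section Assembly.
Variables (n : nat) (H : hgraph n) (c : nat) (x y : 'I_n) (A B : quad n).
Variables (C0 C1 C2 C3 C4 : {set 'I_n}).
Hypotheses (c1 : (1 <= c)%N) (sA : spans_K4m H (quad_set A)).
Hypotheses (k0 : connector H c x (vtx A 0) C0) (k4 : connector H c y (vtx B 0) C4).
Hypotheses (k1 : connector H c (vtx A 1) (vtx B 1) C1) (k2 : connector H c (vtx A 2) (vtx B 2) C2).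
Hypothesis k3 : connector H c (vtx A 3) (vtx B 3) C3.

Let S := quad_set A :|: quad_set B :|: C0 :|: C4 :|: C1 :|: C2 :|: C3.

Lemma K4m_factor_x_side : x \notin S -> #|S| = (4 * (5 * c + 1) - 1)%N -> has_K4m_factor H (x |: S).
Proof.
move=> xS cS.
set Bs := [:: x |: C0; quad_set A; vtx B 1 |: C1; vtx B 2 |: C2; vtx B 3 |: C3; vtx B 0 |: C4].
have eU : x |: S = \bigcup_(D <- Bs) D.
  by rewrite /Bs !big_cons big_nil setU0 /S /quad_set; set_eq_by_cases.
have [c0 _] := connector_cardU1 c1 k0; have [_ c4] := connector_cardU1 c1 k4.
have [_ d1] := connector_cardU1 c1 k1; have [_ d2] := connector_cardU1 c1 k2.
have [_ d3] := connector_cardU1 c1 k3.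
case/and5P: k0 => _ _ _ f0 _; case/and5P: k4 => _ _ _ _ f4.
case/and5P: k1 => _ _ _ _ f1; case/and5P: k2 => _ _ _ _ f2; case/and5P: k3 => _ _ _ _ f3.
rewrite eU; apply: K4m_factor_bigU; first by rewrite /= f0 f1 f2 f3 f4 (K4m_factor_spans sA).
have [/eqP cA _] := andP sA.
rewrite -eU cardsU1 xS cS /Bs !big_cons big_nil c0 cA d1 d2 d3 c4.
by clear -c1; lia.
Qed.

End Assembly.

Lemma connector_sym n (H : hgraph n) c p q C : connector H c p q C = connector H c q p C.
Proof. by rewrite /connector andbCA [X in _ && (_ && (_ && X))]andbC. Qed.

Lemma assemble_connector n (H : hgraph n) c (x y : 'I_n) (A B : quad n) C0 C1 C2 C3 C4 :
  (1 <= c)%N -> spans_K4m H (quad_set A) -> spans_K4m H (quad_set B) ->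
  connector H c x (vtx A 0) C0 -> connector H c y (vtx B 0) C4 ->
  connector H c (vtx A 1) (vtx B 1) C1 -> connector H c (vtx A 2) (vtx B 2) C2 ->
  connector H c (vtx A 3) (vtx B 3) C3 ->
  let S := quad_set A :|: quad_set B :|: C0 :|: C4 :|: C1 :|: C2 :|: C3 in
  x \notin S -> y \notin S -> #|S| = (4 * (5 * c + 1) - 1)%N -> connector H (5 * c + 1) x y S.
Proof.
move=> c1 sA sB k0 k4 k1 k2 k3 S xS yS cS.
apply/and5P; split; rewrite ?cS ?eqxx //.
  exact: (K4m_factor_x_side c1 sA k0 k4 k1 k2 k3 xS cS).
have eS : quad_set B :|: quad_set A :|: C4 :|: C0 :|: C1 :|: C2 :|: C3 = S.
  by rewrite /S (setUC (quad_set B)) (setUAC _ C4).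
rewrite connector_sym in k1; rewrite connector_sym in k2; rewrite connector_sym in k3.
by have := K4m_factor_x_side c1 sB k4 k0 k1 k2 k3; rewrite eS; apply.
Qed.

Lemma stage7_connector n (H : hgraph n) c Q Vx Vy (x y : 'I_n) t :
  (1 <= c)%N -> stage7 H c Q Vx Vy x y t -> connector H (5 * c + 1) x y (used7 t).
Proof.
move=> c1 st; have /andP[/eqP cS dS] := stage7_used st.
case: t st cS dS => [[[[[[A B] C0] C4] C1] C2] C3].
case/andP => /andP[/andP[/andP[/andP[/andP[/andP[/and5P[sA _ _ _ _] _]
  /andP[/and5P[sB _ _ _ _] _]] /andP[k0 _]] /andP[k4 _]] /andP[k1 _]] /andP[k2 _]] /andP[k3 _].
move=> /= cS dS; apply: assemble_connector => //.
- by rewrite (disjointFl dS (set21 x y)).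
- by rewrite (disjointFl dS (set22 x y)).
- by rewrite cS; lia.
Qed.

Lemma card_le_fibers (T U : finType) (A : {set T}) (f : T -> U) (B : {set U}) M :
  (forall t, t \in A -> f t \in B) -> (forall u, #|[set t in A | f t == u]| <= M)%N ->
  (#|A| <= #|B| * M)%N.
Proof.
move=> fAB hM; rewrite -sum1_card (partition_big_imset f) /=.
apply: (@leq_trans (\sum_(u in f @: A) M)).
  apply: leq_sum => u _; apply: leq_trans (hM u); rewrite -sum1_card.
  by apply: eq_leq; apply: eq_bigl => t; rewrite inE.
rewrite sum_nat_const leq_mul2r; apply/orP; right; apply: subset_leq_card.
by apply/subsetP => u /imsetP[t tA ->]; apply: fAB.
Qed.

Definition box n (S : {set 'I_n}) : {set pre7 n} :=
  let S4 := setX (setX (setX S S) S) S in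
  setX (setX (setX (setX (setX (setX S4 S4) (powerset S)) (powerset S)) (powerset S))
    (powerset S)) (powerset S).

Definition box_size s := ((s ^ 4) ^ 2 * (2 ^ s) ^ 5)%N.

Lemma card_box n (S : {set 'I_n}) : #|box S| = box_size #|S|.
Proof.
rewrite /box !cardsX !card_powerset /box_size.
have -> : (#|S| * #|S| * #|S| * #|S| = #|S| ^ 4)%N by rewrite !expnS expn0 muln1 !mulnA.
by move: (#|S| ^ 4)%N (2 ^ #|S|)%N => q p; rewrite !expnS expn0 !muln1 !mulnA.
Qed.

Lemma box_size_gt0 s : (0 < s)%N -> (0 < box_size s)%N.
Proof. by move=> s0; rewrite /box_size muln_gt0 !expn_gt0 s0. Qed.

Lemma in_box_used7 n (t : pre7 n) : t \in box (used7 t).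
Proof.
case: t => [[[[[[A B] C0] C4] C1] C2] C3].
rewrite /box !in_setX !powersetE /= /quad_set.
by repeat (apply/andP; split); first [apply/subsetP => z zC | idtac];
  rewrite !inE ?zC ?eqxx ?orbT.
Qed.

Definition connector_length c := (4 * (5 * c + 1) - 1)%N.

Lemma box_size_connector_gt0 c : (0 < INR (box_size (connector_length c)))%Re.
Proof. by apply: lt_0_INR; apply/ltP/box_size_gt0; rewrite /connector_length; lia. Qed.

Lemma close_via_configurations n (H : hgraph n) c (Q : nat -> {set 'I_n}) Vx Vy x y eta eps :
  (1 <= c)%N -> (0 < eta)%Re -> (0 < eps)%Re ->
  is_closed H c eta Vx -> is_closed H c eta Vy ->
  (forall k, (1 <= k <= 3)%N -> is_closed H c eta (Q k)) -> x \in Vx -> y \in Vy ->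
  (eps * INR n ^ 4 <= INR #|[set A | good_quad H Q Vx A]|)%Re ->
  (eps * INR n ^ 4 <= INR #|[set A | good_quad H Q Vy A]|)%Re ->
  (2 * INR (4 * avoid_bound c) <= eps * INR n)%Re ->
  (2 * INR (avoid_bound c) <= eta * INR n)%Re ->
  is_close H (5 * c + 1)
    ((eps / 2) ^ 2 * (eta / 2) ^ 5 / INR (box_size (connector_length c))) x y.
Proof.
move=> c1 eta0 eps0 clVx clVy clQ xVx yVy hVx hVy hKe hKw.
have lower := card_stage7_ge clVx clVy clQ xVx yVy c1 (Rlt_le _ _ eta0) (Rlt_le _ _ eps0)
  hVx hVy hKe hKw.
have M0 := box_size_connector_gt0 c.
have fibers : (#|[set t | stage7 H c Q Vx Vy x y t]| <=
               #|[set S | connector H (5 * c + 1) x y S]| * box_size (connector_length c))%N.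
  apply: (card_le_fibers (f := @used7 n)) => [t|S].
    by rewrite !inE; apply: stage7_connector.
  case: (set_0Vmem [set t in [set t | stage7 H c Q Vx Vy x y t] | used7 t == S]) => [->|[t]].
    by rewrite cards0.
  rewrite !inE => /andP[st /eqP <-].
  have cS : #|used7 t| = connector_length c.
    by have /andP[/eqP -> _] := stage7_used st; rewrite /connector_length; lia.
  rewrite -cS -card_box; apply: subset_leq_card; apply/subsetP => t'.
  by case/setIdP => _ /eqP <-; apply: in_box_used7.
have fibersR : (INR #|[set t | stage7 H c Q Vx Vy x y t]| <=
                INR #|[set S | connector H (5 * c + 1) x y S]| *
                INR (box_size (connector_length c)))%Re.
  by rewrite -mult_INR; apply/le_INR/leP.
rewrite /is_close; apply: (Rmult_le_reg_r _ _ _ M0).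
apply: Rle_trans fibersR; apply: Rle_trans lower; right.
have -> : (4 * (5 * c + 1) - 1 =
           4 + 4 + (4 * c - 1) + (4 * c - 1) + (4 * c - 1) + (4 * c - 1) + (4 * c - 1))%N by lia.
rewrite !pow_add; field; lra.
Qed.

Lemma seq_with_counts (b : nat -> nat) (d : nat) : exists q : seq nat,
  [/\ all (fun i => 1 <= i <= d)%N q,
      forall k, (1 <= k <= d)%N -> count_mem k q = b k &
      size q = (\sum_(1 <= i < d.+1) b i)%N].
Proof.
elim: d => [|d [q [q_range q_count q_size]]].
  by exists [::]; split => //; [move=> k; lia | rewrite big_geq].
exists (q ++ nseq (b d.+1) d.+1); split.
- rewrite all_cat (sub_all _ q_range) => [|i /=]; last by lia.
  by apply/allP => i; rewrite mem_nseq => /andP[_ /eqP ->]; lia.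
- move=> k hk; rewrite count_cat count_nseq /=.
  have [->|ne] := eqVneq k d.+1; last by rewrite q_count ?mul0n ?addn0 //; lia.
  rewrite mul1n -[RHS]add0n; congr (_ + _); apply/count_memPn/negP.
  by move/(allP q_range); lia.
- by rewrite size_cat size_nseq q_size [RHS]big_nat_recr.
Qed.

Section Parts.
Variables (n d : nat) (H : hgraph n) (V : nat -> {set 'I_n}).
Hypothesis disjV :
  forall i j, (1 <= i <= d)%N -> (1 <= j <= d)%N -> i <> j -> [disjoint V i & V j].

Lemma enum_by_parts (p : seq nat) : all (fun i => 1 <= i <= d)%N p ->
  forall S : {set 'I_n}, (forall k, (1 <= k <= d)%N -> #|S :&: V k| = count_mem k p) ->
  #|S| = size p ->
  exists s : seq 'I_n, [/\ size s = size p, S = [set z in s] & all2 (fun z k => z \in V k) s p].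
Proof.
elim: p => [|i p IH] /=.
  by move=> _ S _ /eqP; rewrite cards_eq0 => /eqP ->; exists [::]; split; rewrite ?set_nil.
case/andP => hi hp S hc hS.
have [z] : exists z, z \in S :&: V i by apply/card_gt0P; rewrite (hc i hi) /= eqxx.
rewrite inE => /andP[zS zV].
have inV k : (1 <= k <= d)%N -> (z \in V k) = (i == k).
  move=> hk; have [<-|ne] := eqVneq i k; first by [].
  by rewrite (disjointFr (disjV hi hk (elimN eqP ne)) zV).
have hc' k : (1 <= k <= d)%N -> #|(S :\ z) :&: V k| = count_mem k p.
  move=> hk; have := hc k hk; rewrite /= (cardsD1 z (S :&: V k)) inE zS inV //.
  have -> : (S :&: V k) :\ z = (S :\ z) :&: V k by apply/setP => w; rewrite !inE andbA.
  by move=> /eqP; rewrite eqn_add2l => /eqP.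
have hS' : #|S :\ z| = size p by move: hS; rewrite (cardsD1 z S) zS add1n => -[].
have [s [s_size s_set s_parts]] := IH hp (S :\ z) hc' hS'.
exists (z :: s); split => /=; first by rewrite s_size.
  by apply/setP => w; rewrite -(setD1K zS) s_set !inE.
by rewrite zV s_parts.
Qed.

Lemma count_K4m_le_good_quads (i0 q1 q2 q3 : nat) (P : {set 'I_n} -> bool) :
  all (fun i => 1 <= i <= d)%N [:: i0; q1; q2; q3] ->
  (forall S, spans_K4m H S -> P S -> forall k, (1 <= k <= d)%N ->
     #|S :&: V k| = count_mem k [:: i0; q1; q2; q3]) ->
  (count_K4m H P <=
   #|[set A | good_quad H (fun k => V (nth 0 [:: q1; q2; q3] k.-1)) (V i0) A]|)%N.
Proof.
move=> p_range p_count; rewrite /count_K4m.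
apply: leq_trans (leq_imset_card (@quad_set n) _); apply: subset_leq_card.
apply/subsetP => S; rewrite inE => /andP[sS PS].
have cS : #|S| = size [:: i0; q1; q2; q3] by case/andP: sS => /eqP.
have [s [s_size eS s_parts]] := enum_by_parts p_range (p_count S sS PS) cS.
case: s s_size eS s_parts => [|u [|w1 [|w2 [|w3 []]]]] //= _ eS0.
case/and4P => uV w1V w2V /andP[w3V _]; subst S.
have eS : [set z in [:: u; w1; w2; w3]] = quad_set (u, w1, w2, w3).
  by apply/setP => z; rewrite !inE !orbA.
apply/imsetP; exists (u, w1, w2, w3) => //.
by rewrite inE /good_quad -eS sS /= uV w1V w2V w3V.
Qed.

End Parts.

Lemma sum_drop_first (a : nat -> nat) d : (1 <= d)%N -> (1 <= a 1)%N ->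
  (\sum_(1 <= i < d.+1) a i)%N = 4 -> (\sum_(1 <= i < d.+1) (a i - (i == 1)))%N = 3.
Proof.
move=> d1 a1; rewrite !(big_ltn (_ : 1 < d.+1)%N) //= subn1.
rewrite (eq_big_nat _ _ (F2 := a)) => [|i /andP[i2 _]]; first by lia.
by rewrite (_ : (i == 1) = false) ?subn0 //; apply/negbTE; rewrite neq_ltn i2 orbT.
Qed.

Lemma pattern_legs d (a : nat -> nat) : (1 <= d)%N -> (1 <= a 1)%N ->
  (\sum_(1 <= i < d.+1) a i)%N = 4 ->
  exists q1 q2 q3 : nat, all (fun i => 1 <= i <= d)%N [:: q1; q2; q3] /\
    forall k, (1 <= k <= d)%N -> count_mem k [:: q1; q2; q3] = (a k - (k == 1))%N.
Proof.
move=> d1 a1 sum_a.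
have [q [q_range q_count q_size]] := seq_with_counts (fun k => a k - (k == 1))%N d.
rewrite sum_drop_first // in q_size.
by case: q q_range q_count q_size => [|q1 [|q2 [|q3 []]]] // q_range q_count _; exists q1, q2, q3.
Qed.

Lemma count_mem_cons (k i : nat) s : count_mem k (i :: s) = ((i == k) + count_mem k s)%N.
Proof. by []. Qed.

Section PatternCounts.
Variables (n d : nat) (H : hgraph n) (V : nat -> {set 'I_n}) (a : nat -> nat) (q1 q2 q3 : nat).
Hypothesis disjV :
  forall i j, (1 <= i <= d)%N -> (1 <= j <= d)%N -> i <> j -> [disjoint V i & V j].
Hypotheses (d2 : (2 <= d)%N) (a1 : (1 <= a 1)%N).
Hypothesis q_range : all (fun i => 1 <= i <= d)%N [:: q1; q2; q3].
Hypothesis q_count :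
  forall k, (1 <= k <= d)%N -> count_mem k [:: q1; q2; q3] = (a k - (k == 1))%N.

Let Q k := V (nth 0 [:: q1; q2; q3] k.-1).

Lemma first_pattern_le_good_quads :
  (count_K4m H (fun S => [forall i : 'I_d.+1, (1 <= i)%N ==> (#|S :&: V i| == a i)]) <=
   #|[set A | good_quad H Q (V 1) A]|)%N.
Proof.
apply: (count_K4m_le_good_quads disjV) => [|S _ /forallP hS k hk].
  by apply/andP; split; [lia | exact: q_range].
have := hS (inord k); rewrite inordK; last by case/andP: hk.
case/andP: (hk) => -> _ /eqP ->; rewrite count_mem_cons q_count // eq_sym.
by case: eqVneq => [->|_]; rewrite ?(subnKC a1) ?subn0.
Qed.

Lemma second_pattern_le_good_quads :
  (count_K4m H (fun S => [&& #|S :&: V 1| == (a 1 - 1)%N, #|S :&: V 2| == (a 2).+1 &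
      [forall i : 'I_d.+1, (3 <= i)%N ==> (#|S :&: V i| == a i)]]) <=
   #|[set A | good_quad H Q (V 2) A]|)%N.
Proof.
apply: (count_K4m_le_good_quads disjV) => [|S _ /and3P[/eqP S1 /eqP S2 /forallP hS] k hk].
  by apply/andP; split; [lia | exact: q_range].
rewrite count_mem_cons q_count //.
case: (ltngtP k 2) => [k_lt2|k_gt2|->]; last by rewrite S2 subn0 add1n.
  by have -> : k = 1%N by lia.
have := hS (inord k); rewrite inordK ?k_gt2 => [/eqP ->|]; last by case/andP: hk.
have /negbTE -> : k != 1 by apply/eqP; lia.
by rewrite subn0.
Qed.

End PatternCounts.

Lemma eventually_le_mul (e A : R) : (0 < e)%Re ->
  exists N, forall n, (N <= n)%N -> (A <= e * INR n)%Re.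
Proof.
move=> e0; have [N hN] := INR_archimed e A e0; exists N => n hn.
have : (INR N <= INR n)%Re by apply/le_INR/leP.
nra.
Qed.

Theorem lemma5p4 :
  forall (eta eps : R) (c : nat), Rlt 0 eta -> Rlt 0 eps -> (1 <= c)%N ->
  exists eta' : R, Rlt 0 eta' /\ exists n0 : nat,
  forall (n : nat), (n0 <= n)%N ->
  forall (H : hgraph n), (forall e, e \in H -> #|e| = 3) ->
  forall (d : nat) (V : nat -> {set 'I_n}) (a : nat -> nat),
    (2 <= d <= 4)%N ->
    (forall i j, (1 <= i <= d)%N -> (1 <= j <= d)%N -> i <> j -> [disjoint V i & V j]) ->
    (forall i, (1 <= i <= d)%N -> is_closed H c eta (V i)) ->
    (1 <= a 1)%N ->
    (\sum_(1 <= i < d.+1) a i)%N = 4 ->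
    Rle (Rmult eps (pow (INR n) 4)) (INR (count_K4m H (fun S => (
        [forall i : 'I_d.+1, (1 <= i)%N ==> (#|S :&: V i| == a i)])%N))) ->
    Rle (Rmult eps (pow (INR n) 4)) (INR (count_K4m H (fun S => (
        [&& #|S :&: V 1| == (a 1 - 1)%N, #|S :&: V 2| == (a 2).+1 &
            [forall i : 'I_d.+1, (3 <= i)%N ==> (#|S :&: V i| == a i)]])%N))) ->
    is_closed H (5 * c + 1) eta' (V 1 :|: V 2).
Proof.
move=> eta eps c eta0 eps0 c1.
exists ((eps / 2) ^ 2 * (eta / 2) ^ 5 / INR (box_size (connector_length c)))%Re; split.
  apply: Rdiv_lt_0_compat (box_size_connector_gt0 c).
  by apply: Rmult_lt_0_compat; apply: pow_lt; lra.
have [N1 hN1] := eventually_le_mul (2 * INR (4 * avoid_bound c)) eps0.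
have [N2 hN2] := eventually_le_mul (2 * INR (avoid_bound c)) eta0.
exists (N1 + N2)%N => n hn H _ d V a /andP[d2 _] disjV clV a1 sum_a cntA cntB.
have [q1 [q2 [q3 [q_range q_count]]]] := pattern_legs (ltnW d2) a1 sum_a.
pose Q k := V (nth 0 [:: q1; q2; q3] k.-1).
have clQ k : (1 <= k <= 3)%N -> is_closed H c eta (Q k).
  by case/and4P: q_range => r1 r2 r3 _; case: k => [|[|[|[|k]]]] //= _; apply: clV.
have part z : z \in V 1%N :|: V 2%N -> exists2 i, z \in V i &
    is_closed H c eta (V i) /\ (eps * INR n ^ 4 <= INR #|[set A | good_quad H Q (V i) A]|)%Re.
  case/setUP => zV; [exists 1%N | exists 2%N] => //; split; try (apply: clV; lia).
    apply: Rle_trans cntA _; apply/le_INR/leP; exact: first_pattern_le_good_quads.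
  apply: Rle_trans cntB _; apply/le_INR/leP; exact: second_pattern_le_good_quads.
move=> x y /part[i xV [clVx goodx]] /part[j yV [clVy goody]] _.
apply: close_via_configurations c1 eta0 eps0 clVx clVy clQ xV yV goodx goody _ _.
  by apply: hN1; apply: leq_trans hn; apply: leq_addr.
by apply: hN2; apply: leq_trans hn; apply: leq_addl.
Qed.
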